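(* Let $n\ge3$ and define $c\in\mathbb{Z}_{\ge0}^n$ by $c_k=n-1$ for $k\le n-3$ and $c_k=1$ for $k\in\{n-2,n-1,n\}$. Then $c\in\mathrm{StoRec}_n\setminus\mathrm{PSR}_n(n-3)$.
   Context: $K_n^0$ is the complete graph on vertex set $\{0,1,\dots,n\}$ with sink $0$; every vertex has degree $n$. A configuration is $c\in\mathbb{Z}_{\ge0}^n$, stable if $c_i\le n-1$ for all $i$; $c^{\max}=(n-1,\dots,n-1)$. A deterministic toppling of an unstable vertex $i$ sends one grain to each neighbour (grains sent to the sink disappear). A stochastic toppling (parameter $p\in(0,1)$) of an unstable vertex $i$ sends, independently for each incident edge, one grain along it with probability $p$, else keeps it. For $k\in\{0,\dots,n\}$, the $k$-partial SSM on $K_n^0$ is the model in which vertices $1,\dots,k$ topple stochastically and vertices $k+1,\dots,n$ topple deterministically; its Markov chain on stable configurations adds a grain at vertex $i$ with probability $\mu_i>0$ and then stabilises. $\mathrm{PSR}_n(k)$ is its set of recurrent states; equivalently, the stable configurations reachable from $c^{\max}$ by a finite sequence of grain additions and topplings of unstable vertices in which vertices $k+1,\dots,n$ topple deterministically and vertices $1,\dots,k$ send one grain along each edge of an arbitrary subset of their incident edges. $\mathrm{StoRec}_n=\mathrm{PSR}_n(n)$ is the set of recurrent states of the SSM (all vertices topple stochastically). *)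

From Stdlib Require Import Relations.Relation_Operators.
From mathcomp Require Import all_boot.
Set Implicit Arguments. Unset Strict Implicit. Unset Printing Implicit Defensive.

(* K_n^0 : vertex set {0,...,n}, sink 0.  Non-sink vertex v in {1..n} is
   represented by the ordinal (v-1) : 'I_n.  A configuration assigns a
   number of grains to each non-sink vertex. *)
Definition config (n : nat) := 'I_n -> nat.

Definition stable n (c : config n) : Prop := forall i, c i <= n.-1.

Definition cmax n : config n := fun _ => n.-1.
Arguments cmax n : clear implicits.

Definition add_grain n (c c' : config n) : Prop :=
  exists i : 'I_n, forall j, c' j = c j + (j == i).

(* deterministic toppling of unstable vertex i (degree n): one grain to each
   of the n-1 other non-sink vertices, one grain to the sink (lost) *)
Definition topple_det n (i : 'I_n) (c c' : config n) : Prop :=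
  n <= c i /\ forall j, c' j = if j == i then c i - n else c j + 1.

(* stochastic-style toppling of unstable vertex i: one grain along each edge
   of an arbitrary subset of its incident edges; A = set of non-sink
   neighbours receiving a grain, b = whether the edge to the sink is used *)
Definition topple_sto n (i : 'I_n) (c c' : config n) : Prop :=
  n <= c i /\ exists (A : {set 'I_n}) (b : bool), i \notin A /\
    forall j, c' j = if j == i then c i - (#|A| + b) else c j + (j \in A).

(* one step of the k-partial SSM: vertices 1..k (ordinals < k) topple
   stochastically, vertices k+1..n deterministically *)
Definition psr_step n (k : nat) (c c' : config n) : Prop :=
  add_grain c c' \/
  exists i : 'I_n, if i < k then topple_sto i c c' else topple_det i c c'.

Definition PSR (n k : nat) (c : config n) : Prop :=
  stable c /\ @clos_refl_trans (config n) (@psr_step n k) (cmax n) c.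
Arguments PSR n k c : clear implicits.

Definition StoRec (n : nat) (c : config n) : Prop := PSR n n c.
Arguments StoRec n c : clear implicits.

(* the configuration of Proposition 5.3: c_v = n-1 for v <= n-3, and c_v = 1
   for v in {n-2,n-1,n}; vertex v = ordinal v-1 *)
Definition c53 (n : nat) : config n := fun k => if k < n - 3 then n.-1 else 1.
Arguments c53 n : clear implicits.

(* Recurrence is shown by an explicit firing sequence from c^max.  Each
   stochastic toppling can send grains along any subset of the incident
   edges, so a vertex holding n grains can shed them almost arbitrarily; the
   three last vertices are emptied and refilled to one grain each, while the
   "bulk" vertices 1..n-3 are repeatedly brought back to n-1 by sending a
   single grain to the sink.

   Non-recurrence follows from an invariant of the k-partial model, valid
   whenever at least three vertices are deterministic: some two distinct
   deterministic vertices hold >= 1 and >= 2 grains respectively.  Grain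
   additions and stochastic topplings (of non-deterministic vertices) only
   add grains to deterministic vertices, and a deterministic toppling gives
   one grain to every other vertex, which re-establishes the invariant.  The
   target configuration has exactly one grain on every deterministic vertex
   of the (n-3)-partial model, so it is not reachable. *)

From mathcomp Require Import all_boot zify.
From Stdlib Require Import Relations.Relation_Operators FunctionalExtensionality.
Set Implicit Arguments. Unset Strict Implicit. Unset Printing Implicit Defensive.

Notation reach n k := (@clos_refl_trans (config n) (@psr_step n k)).

Section Moves.
Variables n k : nat.

Lemma reach_ext (c d d' : config n) : reach n k c d -> d =1 d' -> reach n k c d'.
Proof. by move=> cd /functional_extensionality <-. Qed.

Lemma reach_add (c d : config n) (i : 'I_n) :
  (forall j, d j = c j + (j == i)) -> reach n k c d.
Proof. by move=> dE; apply: rt_step; left; exists i. Qed.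

Lemma reach_sto (c d : config n) (i : 'I_n) (A : {set 'I_n}) (b : bool) :
  i < k -> n <= c i -> i \notin A ->
  (forall j, d j = if j == i then c i - (#|A| + b) else c j + (j \in A)) ->
  reach n k c d.
Proof.
move=> ik ci iA dE; apply: rt_step; right; exists i; rewrite ik.
by split=> //; exists A, b.
Qed.

(* Stochastic vertices holding exactly n grains can all be lowered to n-1,
   each by sending a single grain to the sink. *)
Lemma reach_drain (s : seq 'I_n) (c : config n) : uniq s ->
  (forall i, i \in s -> i < k /\ c i = n) ->
  reach n k c (fun j => if j \in s then n.-1 else c j).
Proof.
elim: s c => [|i s IH] c /=; first by move=> _ _; exact: rt_refl.
case/andP=> i_notin_s uniq_s full.
have [ik ci] := full i (mem_head _ _).
pose c1 : config n := fun j => if j == i then n.-1 else c j.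
have drain_i : reach n k c c1.
  apply: (reach_sto (i := i) (A := set0) (b := true)) => //.
  - by rewrite ci.
  - by rewrite in_set0.
  by move=> j; rewrite cards0 in_set0 /c1 ci; case: eqP => _ /=; lia.
apply: rt_trans drain_i _; apply: reach_ext (IH c1 uniq_s _) _.
  move=> j js; have [jk cj] := full j (mem_behead (s := i :: s) js); split=> //.
  by rewrite /c1; case: eqP => // ji; move: i_notin_s; rewrite -ji js.
move=> j; rewrite /c1 in_cons; case: eqP => [->|_] //=.
by rewrite (negbTE i_notin_s).
Qed.

End Moves.
Arguments reach_add {n k c d} i.

Section Recurrence.
Variable m : nat.

(* We work on K_{m+3}^0: the bulk vertices are the ordinals j < m, and the
   last three vertices x, y, z are the ordinals m, m+1, m+2. *)
Definition vx : 'I_m.+3 := Ordinal (leq_addl 2 m.+1 : m < m.+3).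
Definition vy : 'I_m.+3 := Ordinal (leq_addl 1 m.+2 : m.+1 < m.+3).
Definition vz : 'I_m.+3 := Ordinal (ltnSn m.+2).

(* The configuration with value a on each bulk vertex and ax, ay, az on
   x, y, z; every configuration in the firing sequence has this form. *)
Definition shape (a ax ay az : nat) : config m.+3 := fun j =>
  if j < m then a else if val j == m then ax else if val j == m.+1 then ay else az.

Ltac shape_cases j :=
  rewrite /shape -?val_eqE /=; have := ltn_ord j; repeat case: ifP; lia.

(* A vertex firing to every vertex except itself and one other feeds m+1
   vertices. *)
Lemma card_all_but_two (a b : 'I_m.+3) : val a != val b -> #|~: [set a; b]| = m.+1.
Proof.
by move=> ab; have := cardsC [set a; b]; rewrite cards2 -val_eqE ab card_ord; lia.
Qed.

Lemma drain_bulk (ax ay az : nat) :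
  reach m.+3 m.+3 (shape m.+3 ax ay az) (shape m.+2 ax ay az).
Proof.
pose bulk := [seq j <- enum 'I_m.+3 | val j < m].
have := @reach_drain m.+3 m.+3 bulk (shape m.+3 ax ay az).
rewrite filter_uniq ?enum_uniq // => /(_ isT) drained.
apply: reach_ext (drained _) _.
  by move=> i; rewrite mem_filter /shape /= => /andP[-> _]; split.
by move=> j; rewrite mem_filter mem_enum andbT /shape /=; case: ifP => // ->.
Qed.

Lemma c53_stochastic_recurrent : StoRec m.+3 (c53 m.+3).
Proof.
split; first by move=> j; rewrite /c53; case: ifP.
have start : cmax m.+3 = shape m.+2 m.+2 m.+2 m.+2.
  by apply: functional_extensionality => j; rewrite /cmax; shape_cases j.
have finish : shape m.+2 1 1 1 = c53 m.+3.
  by apply: functional_extensionality => j; rewrite /c53; shape_cases j.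
have add_x : reach m.+3 m.+3 (shape m.+2 m.+2 m.+2 m.+2) (shape m.+2 m.+3 m.+2 m.+2).
  by apply: (reach_add vx) => j; shape_cases j.
have fire_x : reach m.+3 m.+3 (shape m.+2 m.+3 m.+2 m.+2) (shape m.+3 0 m.+3 m.+3).
  apply: (reach_sto (i := vx) (A := [set~ vx]) (b := true)) => //.
  - by shape_cases vx.
  - by rewrite !inE eqxx.
  by move=> j; rewrite cardsC1 card_ord in_setC1; shape_cases j.
have fire_y : reach m.+3 m.+3 (shape m.+2 0 m.+3 m.+3) (shape m.+3 0 1 m.+4).
  apply: (reach_sto (i := vy) (A := ~: [set vx; vy]) (b := true)) => //.
  - by shape_cases vy.
  - by rewrite !inE eqxx orbT.
  by move=> j; rewrite card_all_but_two ?inE; shape_cases j.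
have drain_z : reach m.+3 m.+3 (shape m.+3 0 1 m.+4) (shape m.+3 0 1 m.+3).
  apply: (reach_sto (i := vz) (A := set0) (b := true)) => //.
  - by shape_cases vz.
  - by rewrite inE.
  by move=> j; rewrite cards0 inE; shape_cases j.
have fire_z : reach m.+3 m.+3 (shape m.+2 0 1 m.+3) (shape m.+3 1 1 1).
  apply: (reach_sto (i := vz) (A := ~: [set vy; vz]) (b := true)) => //.
  - by shape_cases vz.
  - by rewrite !inE eqxx orbT.
  by move=> j; rewrite card_all_but_two ?inE; shape_cases j.
rewrite start -finish.
apply: rt_trans add_x _; apply: rt_trans fire_x _; apply: rt_trans (drain_bulk _ _ _) _.
apply: rt_trans fire_y _; apply: rt_trans drain_z _; apply: rt_trans (drain_bulk _ _ _) _.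
by apply: rt_trans fire_z _; apply: drain_bulk.
Qed.

End Recurrence.

Section Invariant.
Variables n k : nat.
Hypothesis three_det : k + 3 <= n.

Definition loaded (c : config n) : Prop :=
  exists u v : 'I_n, [/\ k <= u, k <= v, u != v, 0 < c u & 1 < c v].

Lemma third_det_vertex (u v : 'I_n) :
  exists s : 'I_n, [/\ k <= s, s != u & s != v].
Proof.
have [t [kt tn tu tv]] : exists t, [/\ k <= t, t < n, t != u & t != v].
  pose fresh (t : nat) := (t != u) && (t != v).
  exists (if fresh k then k else if fresh k.+1 then k.+1 else k.+2).
  by rewrite /fresh; split; repeat case: ifP; lia.
by exists (Ordinal tn).
Qed.

Lemma loaded_mono (c c' : config n) :
  (forall j : 'I_n, k <= j -> c j <= c' j) -> loaded c -> loaded c'.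
Proof.
move=> grow [u [v [ku kv uv cu cv]]]; exists u, v; split=> //.
- exact: leq_trans cu (grow u ku).
- exact: leq_trans cv (grow v kv).
Qed.

(* After a deterministic toppling of i, any deterministic r != i that held a
   grain now holds two, and a third deterministic vertex holds one. *)
Lemma loaded_det_topple (c c' : config n) (i r : 'I_n) :
  (forall j, c' j = if j == i then c i - n else c j + 1) ->
  k <= r -> r != i -> 0 < c r -> loaded c'.
Proof.
move=> topple kr ri cr; have [s [ks si sr]] := third_det_vertex i r.
exists s, r; split=> //; rewrite topple ?(negbTE si) ?(negbTE ri); lia.
Qed.

(* Additions and stochastic topplings only feed deterministic vertices; a
   deterministic toppling of i keeps a loaded vertex other than i (u if
   u != i, else v). *)
Lemma loaded_step (c c' : config n) : @psr_step n k c c' -> loaded c -> loaded c'.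
Proof.
case=> [[i add]|[i]].
  by apply: loaded_mono => j _; rewrite add leq_addr.
case: ifP => ik.
  move=> [_ [A [b [_ topple]]]]; apply: loaded_mono => j kj; rewrite topple.
  by case: eqP => [ji|_]; [move: kj; rewrite ji; lia | exact: leq_addr].
move=> [_ topple] [u [v [ku kv uv cu cv]]].
case: (eqVneq u i) => [ui|ui]; last exact: loaded_det_topple topple ku ui cu.
by apply: loaded_det_topple topple kv _ _; [rewrite -ui eq_sym | lia].
Qed.

Lemma loaded_reach (c c' : config n) : reach n k c c' -> loaded c -> loaded c'.
Proof.
elim=> [x y|x|x y z _ IHxy _ IHyz]; [exact: loaded_step | by [] |].
by move=> /IHxy /IHyz.
Qed.

Lemma PSR_loaded (c : config n) : PSR n k c -> loaded c.
Proof.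
case=> _ /loaded_reach; apply.
have kn : k < n by lia.
have k1n : k.+1 < n by lia.
by exists (Ordinal kn), (Ordinal k1n); split=> //=; rewrite /cmax -?val_eqE /=; lia.
Qed.

End Invariant.

(* On the deterministic vertices of the (n-3)-partial model, c53 carries a
   single grain, so it violates the invariant. *)
Lemma c53_not_partial_recurrent (n : nat) : 3 <= n -> ~ PSR n (n - 3) (c53 n).
Proof.
move=> hn /PSR_loaded [|_ [v [_ kv _ _]]]; first by lia.
by rewrite /c53 (ltnNge v) kv.
Qed.

Theorem proposition5p3 (n : nat) (hn : 3 <= n) :
  StoRec n (c53 n) /\ ~ PSR n (n - 3) (c53 n).
Proof.
split; last exact: c53_not_partial_recurrent.
by case: n hn => [|[|[|m]]] // _; exact: c53_stochastic_recurrent.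
Qed.
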